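(* Let $n\ge4$ and let $Z^*$ be a nonzero $2$-cocycle over $[n]$. Then the facet graph $G_2(Z^* )$ is $2$-connected.
   Context: Fix a field $\mathbb F$. A $j$-simplex is a $(j+1)$-element subset of $[n]$ oriented by increasing order. For a simplex $\rho$ and $\tau=\rho\setminus\{p\}$ with $p$ the $i$-th smallest element of $\rho$, $\mathrm{sign}(\rho,\tau)=(-1)^{i-1}$. A $2$-cochain is a formal $\mathbb F$-combination of $2$-simplices; the coboundary is $\delta\tau=\sum_{p\in[n]\setminus\tau}\mathrm{sign}(\tau\cup\{p\},\tau)(\tau\cup\{p\})$, extended linearly. A $2$-cocycle is a $2$-cochain $Z$ with $\delta Z=0$. The facet graph $G_2(Z^* )$ has vertex set $\mathrm{Supp}(Z^* )$ (simplices with nonzero coefficient), two $2$-simplices adjacent iff they share an edge. A graph is $k$-connected if deleting any set of fewer than $k$ of its vertices leaves a nonempty connected graph. *)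

From HB Require Import structures.
From mathcomp Require Import all_boot all_order all_algebra.
Set Implicit Arguments. Unset Strict Implicit. Unset Printing Implicit Defensive.
Import GRing.Theory.
Local Open Scope ring_scope.

(* The ground set [n] is modelled by 'I_n (order-isomorphic to {1..n}).
   A j-simplex is a set s : {set 'I_n} with #|s| = j+1, oriented increasingly.
   A 2-cochain over F is a function Z : {set 'I_n} -> F; only its values on
   3-element sets (2-simplices) are meaningful. *)

Definition cochain (F : fieldType) (n : nat) := {set 'I_n} -> F.

(* number of elements of rho smaller than p, i.e. i-1 when p is the i-th smallest *)
Definition rank_in (n : nat) (rho : {set 'I_n}) (p : 'I_n) : nat :=
  #|[set q in rho | (q < p)%N]|.

Definition simplex_sign (F : fieldType) (n : nat) (rho : {set 'I_n}) (p : 'I_n) : F :=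
  (-1) ^+ rank_in rho p.

Definition coboundary (F : fieldType) (n : nat) (Z : cochain F n) : cochain F n :=
  fun rho => \sum_(p in rho) simplex_sign F rho p * Z (rho :\ p).

Definition is_2cocycle (F : fieldType) (n : nat) (Z : cochain F n) : Prop :=
  forall rho : {set 'I_n}, #|rho| = 4%N -> coboundary Z rho = 0.

Definition nonzero_2cochain (F : fieldType) (n : nat) (Z : cochain F n) : Prop :=
  exists s : {set 'I_n}, #|s| = 3%N /\ Z s != 0.

Definition supp2 (F : fieldType) (n : nat) (Z : cochain F n) : {set {set 'I_n}} :=
  [set s : {set 'I_n} | (#|s| == 3%N) && (Z s != 0)].

Definition share_edge (n : nat) (s t : {set 'I_n}) : bool :=
  (s != t) && (#|s :&: t| == 2%N).

Definition induced_rel (T : finType) (W : {set T}) (e : rel T) : rel T :=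
  fun x y => [&& x \in W, y \in W & e x y].

Definition k_connected (T : finType) (V : {set T}) (e : rel T) (k : nat) : Prop :=
  forall D : {set T}, D \subset V -> (#|D| < k)%N ->
    (V :\: D != set0) /\
    (forall x y, x \in V :\: D -> y \in V :\: D -> connect (induced_rel (V :\: D) e) x y).

Definition facet_graph_2connected (F : fieldType) (n : nat) (Z : cochain F n) : Prop :=
  k_connected (supp2 Z) (@share_edge n) 2.

From HB Require Import structures.
From mathcomp Require Import all_boot all_order all_algebra.
Set Implicit Arguments. Unset Strict Implicit. Unset Printing Implicit Defensive.
Import GRing.Theory.
Local Open Scope ring_scope.

(* Deleting fewer than two vertices from the facet graph removes at most one
   triangle r; write W for the support of Z minus r.  The cocycle condition on a
   4-set Q says that Q never has exactly one face in the support, so a supported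
   triangle s and a vertex y outside s yield a second supported triangle in
   s + y, sharing an edge with s.  For n >= 4 this gives two supported
   triangles, so W is nonempty.  Two triangles of W through a common vertex x
   are joined inside their union: through a "middle" triangle containing x, or,
   if no middle triangle lies in W, through two "outer" triangles avoiding x, at
   most one of which can be r.  Disjoint triangles are reduced to this case by a
   single exchange step. *)

(* Bookkeeping for small explicit sets of points assumed pairwise distinct:
   [neqs_of H] turns [H : uniq _] or [H : _ \notin [set _; ..]] into
   disequalities, which [finset_dec] uses to decide memberships, set
   equalities and [uniq] goals. *)
Local Ltac rewrite_neqs := repeat match goal with
  | H : is_true (?u != ?v) |- context [?u == ?v] => rewrite (negbTE H)
  | H : is_true (?u != ?v) |- context [?v == ?u] => rewrite (eq_sym v u) (negbTE H)
  end.

Local Ltac neqs_of H := let U := fresh in have U := H;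
  rewrite /= ?inE ?negb_or /= in U;
  repeat match goal with
  | U : is_true ((_ && _) && _) |- _ => rewrite -andbA in U
  | U : is_true ((_ != _) && _) |- _ => case/andP: U => ? ?
  | U : is_true true |- _ => clear U
  end.

Local Ltac finset_dec :=
  try (apply/setP => ?); rewrite /= ?inE; rewrite_neqs; rewrite ?eqxx /=;
  repeat match goal with |- context [?y == ?u] =>
    case: (y =P u) => [->|/eqP ?]; rewrite_neqs; rewrite ?eqxx /= end;
  rewrite ?orbT ?orbF ?andbT ?andbF //.

Lemma card_set3 (T : finType) (x a b : T) :
  uniq [:: x; a; b] -> #|[set x; a; b]| = 3%N.
Proof. by move=> uq; neqs_of uq; rewrite setUC cardsU1 cards2; finset_dec. Qed.

Lemma card_set4 (T : finType) (x a b c : T) : uniq [:: x; a; b; c] ->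
  #|[set x; a; b; c]| = 4%N.
Proof. by move=> uq; neqs_of uq; rewrite setUC cardsU1 card_set3; finset_dec. Qed.

Lemma card3_mem (T : finType) (s : {set T}) (x : T) : #|s| = 3%N -> x \in s ->
  exists a b, uniq [:: x; a; b] /\ s = [set x; a; b].
Proof.
move=> s3 xs; have /cards2P[a [b [ab sx]]] : #|s :\ x| == 2%N.
  by move: s3; rewrite (cardsD1 x) xs add1n => -[->].
have xab : x \notin [set a; b] by rewrite -sx setD11.
exists a, b; split; first by move: xab; rewrite /= !inE ab => ->.
by rewrite -(setD1K xs) sx setUA.
Qed.

Lemma card3_set (T : finType) (s : {set T}) : #|s| = 3%N ->
  exists a b c, uniq [:: a; b; c] /\ s = [set a; b; c].
Proof.
move=> s3; have [x xs] : {x | x \in s}.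
  by case: (set_0Vmem s) => // s0; move: s3; rewrite s0 cards0.
by have [a [b]] := card3_mem s3 xs; exists x, a, b.
Qed.

Lemma memNset_neq (T : finType) (A B : {set T}) (y : T) :
  y \in A -> y \notin B -> A != B.
Proof. by move=> yA; apply: contraNneq => <-. Qed.

Lemma coboundary_face (F : fieldType) (n : nat) (Z : cochain F n)
    (rho : {set 'I_n}) (p : 'I_n) :
  coboundary Z rho = 0 -> p \in rho -> Z (rho :\ p) != 0 ->
  exists2 q, q \in rho :\ p & Z (rho :\ q) != 0.
Proof.
move=> dZ prho nz; apply/exists_inP; apply: contraNT nz.
rewrite negb_exists_in => /forall_inP Z0.
move/eqP: dZ; rewrite /coboundary (bigD1 p) //= big1 ?addr0.
  by rewrite mulf_eq0 signr_eq0.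
by move=> q /andP[qrho qp]; rewrite (eqP (negbNE (Z0 q _))) ?mulr0 // !inE qp.
Qed.

Section Cocycle.
Variables (F : fieldType) (n : nat) (Z : cochain F n).
Hypothesis cZ : is_2cocycle Z.

Lemma cocycle_exchange (a b c y : 'I_n) : uniq [:: a; b; c; y] ->
  Z [set a; b; c] != 0 ->
  [\/ Z [set y; b; c] != 0, Z [set a; y; c] != 0 | Z [set a; b; y] != 0].
Proof.
move=> uq nz; have rho4 := card_set4 uq; neqs_of uq.
have [||q] := coboundary_face (cZ rho4) (p := y); first by finset_dec.
  by have -> : [set a; b; c; y] :\ y = [set a; b; c] by finset_dec.
rewrite !inE -!orbA => /andP[qy /or4P[]] /eqP qE; subst q => Zq.
- by apply: Or31; move: Zq; have -> : [set a; b; c; y] :\ a = [set y; b; c] by finset_dec.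
- by apply: Or32; move: Zq; have -> : [set a; b; c; y] :\ b = [set a; y; c] by finset_dec.
- by apply: Or33; move: Zq; have -> : [set a; b; c; y] :\ c = [set a; b; y] by finset_dec.
- by rewrite eqxx in qy.
Qed.

Lemma supp2_other (s : {set 'I_n}) : (4 <= n)%N -> s \in supp2 Z ->
  exists2 u, u \in supp2 Z & u != s.
Proof.
move=> n4; rewrite inE => /andP[/eqP s3 nz].
have [p ps] : {p | p \in ~: s}.
  case: (set_0Vmem (~: s)) => // sC0; move: (cardsC s).
  by rewrite sC0 cards0 s3 card_ord addn0 => n3; move: n4; rewrite -n3.
have [a [b [c [uabc es]]]] := card3_set s3.
rewrite inE es in ps nz *; neqs_of uabc; neqs_of ps.
have uq : uniq [:: a; b; c; p] by finset_dec.
case: (cocycle_exchange uq nz) => nz';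
  [exists [set p; b; c] | exists [set a; p; c] | exists [set a; b; p]];
  rewrite ?inE ?card_set3 ?eqxx ?nz' //; try finset_dec;
  by apply: (memNset_neq (y := p)); finset_dec.
Qed.

End Cocycle.

Section FacetGraphMinusTriangle.
Variables (F : fieldType) (n : nat) (Z : cochain F n) (r : {set 'I_n}).
Hypothesis cZ : is_2cocycle Z.
Local Notation W := (supp2 Z :\ r).
Local Notation conn := (connect (induced_rel W (@share_edge n))).

Lemma triangle_in_W (p q u : 'I_n) : uniq [:: p; q; u] -> Z [set p; q; u] != 0 ->
  [set p; q; u] != r -> [set p; q; u] \in W.
Proof. by move=> uq nz ne; rewrite !inE ne card_set3 // eqxx nz. Qed.

Lemma triangle_notin_W (p q u : 'I_n) : uniq [:: p; q; u] -> Z [set p; q; u] != 0 ->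
  [set p; q; u] \notin W -> [set p; q; u] = r.
Proof. by move=> uq nz; apply: contraNeq; apply: triangle_in_W. Qed.

Lemma card_W (s : {set 'I_n}) : s \in W -> #|s| = 3%N.
Proof. by rewrite !inE => /and3P[_ /eqP]. Qed.

Lemma conn_common_edge (p q : 'I_n) (s t : {set 'I_n}) : p != q ->
  p \in s -> q \in s -> p \in t -> q \in t -> s \in W -> t \in W -> conn s t.
Proof.
move=> pq ps qs pt qt sW tW; have [-> | st] := eqVneq s t; first exact: connect0.
apply: connect1; rewrite /induced_rel sW tW /share_edge st /= eqn_leq.
have s3 := card_W sW; have t3 := card_W tW.
have -> : (#|s :&: t| <= 2)%N.
  rewrite -ltnS -s3 proper_card // properE subsetIl subsetIidl.
  by apply: contra st => sst; rewrite eqEcard sst s3 t3.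
have <- : #|[set p; q]| = 2%N by rewrite cards2 pq.
apply/subset_leq_card/subsetP => z; rewrite !inE.
by case/orP => /eqP ->; apply/andP.
Qed.

Ltac link p q := apply: (conn_common_edge (p := p) (q := q)) => //; finset_dec.

Lemma outer_triangle_in_W (x a b c d : 'I_n) : uniq [:: x; a; b; c; d] ->
  [set x; a; b] \in W ->
  [set x; c; b] \notin W -> [set x; a; c] \notin W ->
  [set x; d; b] \notin W -> [set x; a; d] \notin W ->
  [set c; a; b] \in W \/ [set d; a; b] \in W.
Proof.
move=> uq sW mcb mac mdb mad; have sZ : Z [set x; a; b] != 0.
  by move: sW; rewrite !inE => /and3P[].
(* If the second supported triangle of [x a b y] is a middle one, it lies
   outside W, so it is [r], which then contains [y] and misses [z]. *)
have outer y z : uniq [:: x; a; b; y; z] ->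
    [set x; y; b] \notin W -> [set x; a; y] \notin W ->
    Z [set y; a; b] != 0 \/ (y \in r) && (z \notin r).
  move=> uq' myb may; neqs_of uq'.
  case: (cocycle_exchange cZ (a := x) (b := a) (c := b) (y := y) _ sZ) => [||m|m];
    [finset_dec | by left | right ..].
  - by rewrite -(triangle_notin_W _ m myb); finset_dec.
  - by rewrite -(triangle_notin_W _ m may); finset_dec.
have uq' : uniq [:: x; a; b; d; c] by neqs_of uq; finset_dec.
have := outer c d uq mcb mac; have := outer d c uq' mdb mad; neqs_of uq.
case=> [od | /andP[dr cr]]; case=> [oc | /andP[cr' dr']].
- have [cr | ncr] := eqVneq [set c; a; b] r.
    right; apply: triangle_in_W => //; first by finset_dec.
    by rewrite -cr; apply: (memNset_neq (y := d)); finset_dec.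
  by left; apply: triangle_in_W => //; finset_dec.
- right; apply: triangle_in_W => //; first by finset_dec.
  by apply: (memNset_neq (y := d)); finset_dec.
- left; apply: triangle_in_W => //; first by finset_dec.
  by apply: (memNset_neq (y := c)); finset_dec.
- by rewrite dr in dr'.
Qed.

(* Either a middle triangle [x p q], with [p] in [a b] and [q] in [c d], lies
   in W, or each side sees an outer triangle in W, and any outer triangle
   containing [a b] shares an edge with any one containing [c d]. *)
Lemma conn_common_vertex (x a b c d : 'I_n) : uniq [:: x; a; b; c; d] ->
  [set x; a; b] \in W -> [set x; c; d] \in W -> conn [set x; a; b] [set x; c; d].
Proof.
move=> uq sW tW; neqs_of uq; have uq' : uniq [:: x; c; d; a; b] by finset_dec.
have [mW | mcb] := boolP ([set x; c; b] \in W).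
  by apply: (connect_trans (y := [set x; c; b])); [link x b | link x c].
have [mW | mac] := boolP ([set x; a; c] \in W).
  by apply: (connect_trans (y := [set x; a; c])); [link x a | link x c].
have [mW | mdb] := boolP ([set x; d; b] \in W).
  by apply: (connect_trans (y := [set x; d; b])); [link x b | link x d].
have [mW | mad] := boolP ([set x; a; d] \in W).
  by apply: (connect_trans (y := [set x; a; d])); [link x a | link x d].
have mca : [set x; c; a] \notin W by rewrite setUAC.
have mbd : [set x; b; d] \notin W by rewrite setUAC.
have [o1W | o1W] := outer_triangle_in_W uq sW mcb mac mdb mad;
have [o2W | o2W] := outer_triangle_in_W uq' tW mad mca mbd mcb.
- apply: (connect_trans (y := [set c; a; b])); first by link a b.
  by apply: (connect_trans (y := [set a; c; d])); [link a c | link c d].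
- apply: (connect_trans (y := [set c; a; b])); first by link a b.
  by apply: (connect_trans (y := [set b; c; d])); [link b c | link c d].
- apply: (connect_trans (y := [set d; a; b])); first by link a b.
  by apply: (connect_trans (y := [set a; c; d])); [link a d | link c d].
- apply: (connect_trans (y := [set d; a; b])); first by link a b.
  by apply: (connect_trans (y := [set b; c; d])); [link b d | link c d].
Qed.

Lemma conn_disjoint_exchange (a b c y e f : 'I_n) : uniq [:: a; b; c; y; e; f] ->
  [set y; b; c] != r -> [set a; y; c] != r -> [set a; b; y] != r ->
  [set a; b; c] \in W -> [set y; e; f] \in W -> conn [set a; b; c] [set y; e; f].
Proof.
move=> uq nr1 nr2 nr3 sW tW; have sZ : Z [set a; b; c] != 0.
  by move: sW; rewrite !inE => /and3P[].
neqs_of uq.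
have via u v : uniq [:: y; u; v; e; f] -> u \in [set a; b; c] -> v \in [set a; b; c] ->
    Z [set y; u; v] != 0 -> [set y; u; v] != r -> conn [set a; b; c] [set y; e; f].
  move=> uq' us vs nz nr; neqs_of uq'.
  have mW : [set y; u; v] \in W by apply: triangle_in_W => //; finset_dec.
  apply: (connect_trans (y := [set y; u; v])); first by link u v.
  by apply: conn_common_vertex => //; finset_dec.
case: (cocycle_exchange cZ (y := y) _ sZ) => [|m|m|m]; first by finset_dec.
- by apply: (via b c) => //; finset_dec.
- move: m nr2; have -> : [set a; y; c] = [set y; a; c] by finset_dec.
  by move=> m nr; apply: (via a c) => //; finset_dec.
- move: m nr3; have -> : [set a; b; y] = [set y; a; b] by finset_dec.
  by move=> m nr; apply: (via a b) => //; finset_dec.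
Qed.

(* Exchange towards [d e f] through [d], or through [e] when [d \in r]: the
   exchange triangle then misses [d], so it is not [r]. *)
Lemma conn_disjoint (a b c d e f : 'I_n) : uniq [:: a; b; c; d; e; f] ->
  [set a; b; c] \in W -> [set d; e; f] \in W -> conn [set a; b; c] [set d; e; f].
Proof.
move=> uq sW tW; neqs_of uq; have uq' : uniq [:: a; b; c; e; d; f] by finset_dec.
have [dr | dr] := boolP (d \in r).
  have def : [set d; e; f] = [set e; d; f] by finset_dec.
  rewrite def in tW *; apply: conn_disjoint_exchange => //;
  by rewrite eq_sym; apply: (memNset_neq (y := d)); finset_dec.
by apply: conn_disjoint_exchange => //; apply: (memNset_neq (y := d)); finset_dec.
Qed.

Lemma conn_through_vertex (x : 'I_n) (s t : {set 'I_n}) : x \in s -> x \in t ->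
  s \in W -> t \in W -> conn s t.
Proof.
move=> xs xt sW tW.
have [a [b [uxab es]]] := card3_mem (card_W sW) xs.
have [ta | na] := boolP (a \in t).
  apply: (conn_common_edge (p := a) (q := x)) => //;
  by rewrite ?es; neqs_of uxab; finset_dec.
have [tb | nb] := boolP (b \in t).
  apply: (conn_common_edge (p := b) (q := x)) => //;
  by rewrite ?es; neqs_of uxab; finset_dec.
have [c [d [uxcd et]]] := card3_mem (card_W tW) xt.
rewrite es et in na nb sW tW *; apply: conn_common_vertex => //.
by neqs_of uxab; neqs_of uxcd; neqs_of na; neqs_of nb; finset_dec.
Qed.

Lemma W_connected (s t : {set 'I_n}) : s \in W -> t \in W -> conn s t.
Proof.
move=> sW tW; have [a [b [c [uabc es]]]] := card3_set (card_W sW).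
have [ta | na] := boolP (a \in t).
  by apply: (conn_through_vertex (x := a)); rewrite // ?es; finset_dec.
have [tb | nb] := boolP (b \in t).
  by apply: (conn_through_vertex (x := b)); rewrite // ?es; finset_dec.
have [tc | nc] := boolP (c \in t).
  by apply: (conn_through_vertex (x := c)); rewrite // ?es; finset_dec.
have [d [e [f [udef et]]]] := card3_set (card_W tW).
rewrite es et in na nb nc sW tW *; apply: conn_disjoint => //.
by neqs_of uabc; neqs_of udef; neqs_of na; neqs_of nb; neqs_of nc; finset_dec.
Qed.

End FacetGraphMinusTriangle.

Lemma setD1_of_card_lt2 (T : finType) (V D : {set T}) (r0 : T) :
  r0 \notin V -> (#|D| < 2)%N -> exists r, V :\: D = V :\ r.
Proof.
move=> r0V; rewrite ltnS leq_eqVlt ltnS leqn0 => /orP[/cards1P[r ->] | /eqP/cards0_eq ->].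
  by exists r.
by exists r0; rewrite setD0; apply/esym/setDidPl; rewrite disjoint_sym disjoints1.
Qed.

Theorem theorem4p8 (F : fieldType) (n : nat) (Z : cochain F n) :
  (4 <= n)%N -> is_2cocycle Z -> nonzero_2cochain Z ->
  k_connected (supp2 Z) (@share_edge n) 2.
Proof.
move=> n4 cZ [s0 [s03 nz0]] D _ Dlt.
have set0Z : set0 \notin supp2 Z by rewrite inE cards0.
have [r ->] := setD1_of_card_lt2 set0Z Dlt.
split; last by move=> s t sW tW; apply: W_connected.
have s0Z : s0 \in supp2 Z by rewrite inE s03 eqxx nz0.
have [u uZ us0] := supp2_other cZ n4 s0Z.
apply/set0Pn; have [s0r | s0r] := eqVneq s0 r.
  by exists u; rewrite in_setD1 uZ -s0r us0.
by exists s0; rewrite in_setD1 s0Z s0r.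
Qed.
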